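(* Let $\alpha$ be a nonzero real number. Let $\gamma(t)=\Psi(u(t),v(t))$ be an $\alpha$-stationary curve in $\mathbb S^2$ which is not of constant curvature, parametrized by arc length $t$ and not passing through $N$. Then there is a constant $c>0$ such that, expressing $t$ and $v$ as functions of $u$, $$t(u)=\pm\int^u\frac{s^\alpha\sin(s)}{\sqrt{s^{2\alpha}\sin^2(s)-c^2}}\,ds,\qquad v(u)=\pm\int^u\frac{c}{\sin(s)\sqrt{s^{2\alpha}\sin^2(s)-c^2}}\,ds.$$
   Context: $\mathbb S^2\subset\mathbb R^3$ is the unit sphere with the Euclidean metric. It is parametrized by $\Psi(u,v)=(\sin u\cos v,\sin u\sin v,\cos u)$, and $N=(0,0,1)$. The spherical distance from $\Psi(u,v)$ to $N$ is $u\in(0,\pi)$, and the line element is $\sqrt{u'^2+\sin^2(u)v'^2}\,dt$. The energy is $$E_\alpha[\gamma]=\int u^\alpha\sqrt{u'^2+\sin^2(u)v'^2}\,dt.$$ An $\alpha$-stationary curve is a critical point of $E_\alpha$, i.e. $(u,v)$ satisfies its Euler–Lagrange equations. Equivalently, $\kappa=\alpha\langle\mathbf n,\xi\rangle/u$, with $\mathbf n=(\gamma'\times\gamma)/|\gamma'|$, $\kappa=\langle\gamma'',\mathbf n\rangle/|\gamma'|^2$, and $\xi=\Psi_u$. Throughout the paper, $\alpha\ne0$ and curves avoid $N$. Integrals $\int^u$ are indefinite. *)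

From Stdlib Require Import Reals.
From Coquelicot Require Import Coquelicot.
Open Scope R_scope.

Definition gx (u v : R -> R) (t : R) : R := sin (u t) * cos (v t).
Definition gy (u v : R -> R) (t : R) : R := sin (u t) * sin (v t).
Definition gz (u v : R -> R) (t : R) : R := cos (u t).

Definition lineW (u v : R -> R) (t : R) : R :=
  sqrt ((Derive u t)^2 + (sin (u t))^2 * (Derive v t)^2).

(* Euler-Lagrange equations of E_alpha[gamma] = \int u^alpha sqrt(u'^2+sin^2(u) v'^2) dt,
   Lagrangian L(u,v,u',v') = u^alpha W, on the open parameter interval (a,b). *)
Definition alpha_stationary (alpha a b : R) (u v : R -> R) : Prop :=
  (forall t, a < t < b ->
     is_derive (fun s => Rpower (u s) alpha * Derive u s / lineW u v s) t
       (alpha * Rpower (u t) (alpha - 1) * lineW u v t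
        + Rpower (u t) alpha * sin (u t) * cos (u t) * (Derive v t)^2 / lineW u v t)) /\
  (forall t, a < t < b ->
     is_derive (fun s => Rpower (u s) alpha * (sin (u s))^2 * Derive v s / lineW u v s) t 0).

Definition curvature (u v : R -> R) (t : R) : R :=
  let x := gx u v t in let y := gy u v t in let z := gz u v t in
  let x1 := Derive (gx u v) t in let y1 := Derive (gy u v) t in
  let z1 := Derive (gz u v) t in
  let x2 := Derive (Derive (gx u v)) t in let y2 := Derive (Derive (gy u v)) t in
  let z2 := Derive (Derive (gz u v)) t in
  let nrm := sqrt (x1^2 + y1^2 + z1^2) in
  let n1 := (y1 * z - z1 * y) / nrm in
  let n2 := (z1 * x - x1 * z) / nrm in
  let n3 := (x1 * y - y1 * x) / nrm in
  (x2 * n1 + y2 * n2 + z2 * n3) / nrm^2.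

From Stdlib Require Import Reals Lra.
From Coquelicot Require Import Coquelicot.
Open Scope R_scope.

(* The Lagrangian does not depend on v, so the second Euler-Lagrange equation
   gives a Clairaut first integral: along a unit-speed curve,
   u^alpha sin(u)^2 v' is a constant c0.  If c0 = 0 then v is constant and the
   curve is a meridian, an arc of a great circle, hence of constant curvature
   0; so c0 <> 0 and we take c = |c0|.  Unit speed then turns the radicand into
   a square, u^(2 alpha) sin(u)^2 - c^2 = (u^alpha sin(u) u')^2, so wherever
   u' <> 0 (and hence u' has a constant sign) the two integrands are |dt/du|
   and |dv/du|, and the formulas follow by the change of variables s = u(t). *)

Lemma locally_open_interval a b t : a < t < b -> locally t (fun s => a < s < b).
Proof. intros [Hat Htb]. apply (locally_interval _ t a b); simpl; auto. Qed.

Lemma derive0_const (f : R -> R) a b :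
  (forall t, a < t < b -> is_derive f t 0) ->
  forall x y, a < x < b -> a < y < b -> f x = f y.
Proof.
  intros Hf x y Hx Hy.
  assert (Hmin : a < Rmin x y) by (apply Rmin_glb_lt; lra).
  assert (Hmax : Rmax x y < b) by (apply Rmax_lub_lt; lra).
  destruct (MVT_gen f x y (fun _ => 0)) as [c [_ Hc]].
  - intros z Hz. apply Hf. lra.
  - intros z Hz. apply continuity_pt_filterlim, (ex_derive_continuous f).
    exists 0. apply Hf. lra.
  - lra.
Qed.

Lemma IVT_sign_change (g : R -> R) x y :
  (forall z, x <= z <= y -> continuity_pt g z) -> x < y -> g x * g y < 0 ->
  exists z, x <= z <= y /\ g z = 0.
Proof.
  intros Hg Hxy Hneg.
  destruct (Rlt_or_le (g x) 0) as [Hgx | Hgx].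
  - destruct (Ranalysis5.IVT_interv g x y Hg Hxy Hgx) as [z Hz]; [nra | now exists z].
  - assert (Hgx' : 0 < g x).
    { destruct Hgx as [Hgx | Hgx]; [exact Hgx |]. rewrite <- Hgx in Hneg. lra. }
    destruct (Ranalysis5.IVT_interv (fun s => - g s) x y) as [z [Hz Hgz]].
    + intros z Hz. apply continuity_pt_opp, Hg, Hz.
    + exact Hxy.
    + cbv beta. lra.
    + cbv beta. nra.
    + exists z. split; [exact Hz | lra].
Qed.

Lemma continuous_nonzero_sign (g : R -> R) a b :
  a < b ->
  (forall t, a < t < b -> continuous g t) ->
  (forall t, a < t < b -> g t <> 0) ->
  exists e, (e = 1 \/ e = -1) /\ forall t, a < t < b -> 0 < e * g t.
Proof.
  intros Hab Hg Hnz.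
  set (m := (a + b) / 2). assert (Hm : a < m < b) by (unfold m; lra).
  assert (Hno_change : forall x y, a < x < b -> a < y < b -> x < y -> ~ g x * g y < 0).
  { intros x y Hx Hy Hxy Hneg.
    destruct (IVT_sign_change g x y) as [z [Hz Hgz]]; auto.
    - intros z Hz. apply continuity_pt_filterlim, Hg. lra.
    - apply (Hnz z); [lra | exact Hgz]. }
  assert (Hsame : forall t, a < t < b -> 0 < g m * g t).
  { intros t Ht.
    assert (g m * g t <> 0) by (apply Rmult_integral_contrapositive; auto).
    destruct (Rtotal_order m t) as [Hmt | [<- | Htm]].
    - pose proof (Hno_change m t Hm Ht Hmt). lra.
    - nra.
    - pose proof (Hno_change t m Ht Hm Htm). lra. }
  destruct (Rlt_or_le 0 (g m)) as [Hgm | Hgm].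
  - exists 1. split; [now left|]. intros t Ht. pose proof (Hsame t Ht). nra.
  - exists (-1). split; [now right|]. intros t Ht.
    pose proof (Hsame t Ht). pose proof (Hnz m Hm). nra.
Qed.

Lemma Rabs_sign x : exists e, (e = 1 \/ e = -1) /\ x = e * Rabs x.
Proof.
  destruct (Rle_or_lt 0 x) as [Hx | Hx].
  - exists 1. split; [now left|]. rewrite Rabs_pos_eq; lra.
  - exists (-1). split; [now right|]. rewrite Rabs_left; lra.
Qed.

(* [n] is orthogonal to [gamma], hence to a radial acceleration. *)
Lemma curvature_eq0_of_radial_acceleration (u v : R -> R) t k :
  Derive (Derive (gx u v)) t = k * gx u v t ->
  Derive (Derive (gy u v)) t = k * gy u v t ->
  Derive (Derive (gz u v)) t = k * gz u v t ->
  curvature u v t = 0.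
Proof.
  intros Hx Hy Hz. unfold curvature; cbv zeta. rewrite Hx, Hy, Hz. unfold Rdiv. ring.
Qed.

Lemma Derive2_ext_loc (f g : R -> R) t :
  locally t (fun s => f s = g s) -> Derive (Derive f) t = Derive (Derive g) t.
Proof.
  intros Hfg. apply Derive_ext_loc.
  apply (filter_imp (fun s => locally s (fun r => f r = g r))).
  - intros s Hs. apply Derive_ext_loc, Hs.
  - apply locally_locally, Hfg.
Qed.

Lemma curvature_ext_loc (u v u1 v1 : R -> R) t :
  locally t (fun s => u s = u1 s /\ v s = v1 s) -> curvature u v t = curvature u1 v1 t.
Proof.
  intros Huv.
  assert (Hcoord : forall F : R -> R -> R,
             locally t (fun s => F (u s) (v s) = F (u1 s) (v1 s))).
  { intros F. eapply filter_imp; [| exact Huv]. intros s [-> ->]. reflexivity. }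
  pose proof (Hcoord (fun x y => sin x * cos y)) as Hx.
  pose proof (Hcoord (fun x y => sin x * sin y)) as Hy.
  pose proof (Hcoord (fun x _ => cos x)) as Hz.
  change (locally t (fun s => gx u v s = gx u1 v1 s)) in Hx.
  change (locally t (fun s => gy u v s = gy u1 v1 s)) in Hy.
  change (locally t (fun s => gz u v s = gz u1 v1 s)) in Hz.
  unfold curvature; cbv zeta.
  rewrite (locally_singleton _ _ Hx), (Derive_ext_loc _ _ _ Hx), (Derive2_ext_loc _ _ _ Hx),
    (locally_singleton _ _ Hy), (Derive_ext_loc _ _ _ Hy), (Derive2_ext_loc _ _ _ Hy),
    (locally_singleton _ _ Hz), (Derive_ext_loc _ _ _ Hz), (Derive2_ext_loc _ _ _ Hz).
  reflexivity.
Qed.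

Lemma Derive2_comp_affine_harmonic (A dA : R -> R) e d t :
  (forall x, is_derive A x (dA x)) -> (forall x, is_derive dA x (- A x)) -> e ^ 2 = 1 ->
  Derive (Derive (fun s => A (e * s + d))) t = - A (e * t + d).
Proof.
  intros HA HdA He.
  assert (Hee : e * e = 1) by (simpl in He; lra).
  assert (Haff : forall s, is_derive (fun r => e * r + d) s e).
  { intros s. auto_derive; [exact I | ring]. }
  rewrite (Derive_ext (Derive (fun s => A (e * s + d))) (fun s => e * dA (e * s + d))).
  - apply is_derive_unique.
    replace (- A (e * t + d)) with (e * (e * - A (e * t + d)))
      by (rewrite <- Rmult_assoc, Hee; ring).
    apply (is_derive_scal (fun s => dA (e * s + d))), (is_derive_comp dA), Haff. apply HdA.
  - intros s. apply is_derive_unique, (is_derive_comp A), Haff. apply HA.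
Qed.

Lemma curvature_great_circle e d w t :
  e ^ 2 = 1 -> curvature (fun s => e * s + d) (fun _ => w) t = 0.
Proof.
  intros He. apply (curvature_eq0_of_radial_acceleration _ _ _ (-1)); etransitivity.
  - apply (Derive2_comp_affine_harmonic (fun x => sin x * cos w) (fun x => cos x * cos w));
      [intros x; auto_derive; [exact I | ring] .. | exact He].
  - unfold gx. ring.
  - apply (Derive2_comp_affine_harmonic (fun x => sin x * sin w) (fun x => cos x * sin w));
      [intros x; auto_derive; [exact I | ring] .. | exact He].
  - unfold gy. ring.
  - apply (Derive2_comp_affine_harmonic cos (fun x => - sin x));
      [intros x; auto_derive; [exact I | ring] .. | exact He].
  - unfold gz. ring.
Qed.

Lemma meridian_curvature_eq0 a b (u v : R -> R) :
  (forall t, a < t < b -> ex_derive u t /\ ex_derive (Derive u) t) ->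
  (forall t, a < t < b -> Derive u t ^ 2 = 1) ->
  (forall t, a < t < b -> is_derive v t 0) ->
  forall t, a < t < b -> curvature u v t = 0.
Proof.
  intros Hu Hunit Hv t Ht.
  destruct (continuous_nonzero_sign (Derive u) a b) as [e [He Hsign]].
  - lra.
  - intros s Hs. apply (ex_derive_continuous (Derive u)), Hu, Hs.
  - intros s Hs Hzero. pose proof (Hunit s Hs) as H1. rewrite Hzero in H1. simpl in H1. lra.
  - assert (Hslope : forall s, a < s < b -> is_derive u s e).
    { intros s Hs. replace e with (Derive u s).
      - apply Derive_correct, Hu, Hs.
      - pose proof (Hunit s Hs). pose proof (Hsign s Hs). destruct He as [-> | ->]; nra. }
    assert (Hu_affine : forall s, a < s < b -> u s = e * s + (u t - e * t)).
    { intros s Hs.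
      assert (Hc : u s - e * s = u t - e * t).
      { apply (derive0_const (fun r => u r - e * r) a b); auto.
        intros r Hr. auto_derive.
        - exists e. apply Hslope, Hr.
        - change (fun x => u x) with u. rewrite (is_derive_unique _ _ _ (Hslope r Hr)). ring. }
      lra. }
    rewrite (curvature_ext_loc u v (fun s => e * s + (u t - e * t)) (fun _ => v t) t).
    + apply curvature_great_circle. destruct He as [-> | ->]; ring.
    + eapply filter_imp; [| apply (locally_open_interval a b t Ht)].
      intros s Hs. split; [apply Hu_affine, Hs | apply (derive0_const v a b Hv s t Hs Ht)].
Qed.

Lemma clairaut_first_integral alpha a b (u v : R -> R) :
  a < b -> alpha_stationary alpha a b u v ->
  (forall t, a < t < b -> (Derive u t)^2 + (sin (u t))^2 * (Derive v t)^2 = 1) ->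
  exists c0, forall t, a < t < b -> Rpower (u t) alpha * sin (u t) ^ 2 * Derive v t = c0.
Proof.
  intros Hab [_ Hconst] Hunit.
  set (m := (a + b) / 2). assert (Hm : a < m < b) by (unfold m; lra).
  exists (Rpower (u m) alpha * sin (u m) ^ 2 * Derive v m / lineW u v m).
  intros t Ht. pose proof (derive0_const _ a b Hconst t m Ht Hm) as Heq. cbv beta in Heq.
  rewrite <- Heq. unfold lineW. rewrite (Hunit t Ht), sqrt_1. field.
Qed.

Definition dt_du (alpha c s : R) : R :=
  Rpower s alpha * sin s / sqrt (Rpower s (2 * alpha) * (sin s)^2 - c^2).

Definition dv_du (alpha c s : R) : R :=
  c / (sin s * sqrt (Rpower s (2 * alpha) * (sin s)^2 - c^2)).

Section UnitSpeedClairaut.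

(* [x], [d], [w] stand for the values of u, u', v' at one time t. *)
Variables (alpha c e0 e1 x d w : R).
Hypotheses (Hx : 0 < x < PI) (He0 : e0 = 1 \/ e0 = -1) (He1 : e1 = 1 \/ e1 = -1)
  (Hd : 0 < e1 * d) (Hunit : d ^ 2 + sin x ^ 2 * w ^ 2 = 1)
  (Hclairaut : Rpower x alpha * sin x ^ 2 * w = e0 * c).

Let Hpow : 0 < Rpower x alpha. Proof. apply exp_pos. Qed.
Let Hsin : 0 < sin x. Proof. apply sin_gt_0; lra. Qed.
Let Hd0 : d <> 0. Proof. intros ->. lra. Qed.

Lemma clairaut_radicand :
  Rpower x (2 * alpha) * sin x ^ 2 - c ^ 2 = (Rpower x alpha * sin x * d) ^ 2.
Proof.
  replace (2 * alpha) with (alpha + alpha) by ring. rewrite Rpower_plus.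
  replace (c ^ 2) with ((e0 * c) ^ 2) by (destruct He0 as [-> | ->]; ring).
  rewrite <- Hclairaut. nra.
Qed.

Lemma clairaut_radicand_pos : 0 < Rpower x (2 * alpha) * sin x ^ 2 - c ^ 2.
Proof.
  rewrite clairaut_radicand. apply pow2_gt_0.
  repeat apply Rmult_integral_contrapositive_currified; lra.
Qed.

Lemma clairaut_sqrt_radicand :
  sqrt (Rpower x (2 * alpha) * sin x ^ 2 - c ^ 2) = e1 * (Rpower x alpha * sin x * d).
Proof.
  rewrite clairaut_radicand.
  replace ((Rpower x alpha * sin x * d) ^ 2) with ((e1 * (Rpower x alpha * sin x * d)) ^ 2)
    by (destruct He1 as [-> | ->]; ring).
  apply sqrt_pow2.
  replace (e1 * (Rpower x alpha * sin x * d)) with (Rpower x alpha * sin x * (e1 * d)) by ring.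
  apply Rlt_le, Rmult_lt_0_compat; [apply Rmult_lt_0_compat|]; assumption.
Qed.

Lemma unit_speed_dt_du : 1 = e1 * (d * dt_du alpha c x).
Proof.
  unfold dt_du. rewrite clairaut_sqrt_radicand.
  destruct He1 as [-> | ->]; field; repeat split; lra.
Qed.

Lemma unit_speed_dv_du : w = e0 * e1 * (d * dv_du alpha c x).
Proof.
  assert (Hw : w = e0 * c / (Rpower x alpha * sin x ^ 2)).
  { rewrite <- Hclairaut. field. lra. }
  unfold dv_du. rewrite clairaut_sqrt_radicand, Hw.
  destruct He0 as [-> | ->], He1 as [-> | ->]; field; repeat split; lra.
Qed.

Lemma continuous_dt_du : continuous (dt_du alpha c) x.
Proof.
  pose proof clairaut_radicand_pos as Hrad.
  apply (ex_derive_continuous (dt_du alpha c)). unfold dt_du, Rpower in *.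
  auto_derive. repeat split; try lra. apply Rgt_not_eq, sqrt_lt_R0, Hrad.
Qed.

Lemma continuous_dv_du : continuous (dv_du alpha c) x.
Proof.
  pose proof clairaut_radicand_pos as Hrad.
  apply (ex_derive_continuous (dv_du alpha c)). unfold dv_du, Rpower in *.
  auto_derive. repeat split; try lra.
  apply Rmult_integral_contrapositive_currified; [lra | apply Rgt_not_eq, sqrt_lt_R0, Hrad].
Qed.

End UnitSpeedClairaut.

Lemma increment_eq_RInt_comp (f u w : R -> R) k p q t0 t1 :
  (forall t, p < t < q -> ex_derive u t /\ continuous (Derive u) t) ->
  (forall t, p < t < q -> ex_derive w t /\ continuous (Derive w) t) ->
  (forall t, p < t < q -> continuous f (u t)) ->
  (forall t, p < t < q -> Derive w t = k * (Derive u t * f (u t))) ->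
  p < t0 < q -> p < t1 < q ->
  w t1 - w t0 = k * RInt f (u t0) (u t1).
Proof.
  intros Hu Hw Hf Hdw Ht0 Ht1.
  assert (Hin : forall t, Rmin t0 t1 <= t <= Rmax t0 t1 -> p < t < q).
  { intros t Ht.
    assert (p < Rmin t0 t1) by (apply Rmin_glb_lt; lra).
    assert (Rmax t0 t1 < q) by (apply Rmax_lub_lt; lra).
    lra. }
  assert (Hftc : is_RInt (Derive w) t0 t1 (w t1 - w t0)).
  { apply (is_RInt_derive w).
    - intros t Ht. apply Derive_correct, Hw, Hin, Ht.
    - intros t Ht. apply Hw, Hin, Ht. }
  assert (Hsubst : is_RInt (Derive w) t0 t1 (k * RInt f (u t0) (u t1))).
  { apply (is_RInt_ext (fun t => scal k (scal (Derive u t) (f (u t))))).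
    - intros t Ht. symmetry. apply Hdw, Hin. lra.
    - apply (is_RInt_scal (V := R_NormedModule)), (is_RInt_comp (V := R_CompleteNormedModule)).
      + intros t Ht. apply Hf, Hin, Ht.
      + intros t Ht. split; [apply Derive_correct|]; apply Hu, Hin, Ht. }
  rewrite <- (is_RInt_unique _ _ _ _ Hftc). exact (is_RInt_unique _ _ _ _ Hsubst).
Qed.

Lemma clairaut_constant_neq0 alpha a b (u v : R -> R) c0 :
  (forall t, a < t < b -> 0 < u t < PI) ->
  (forall t, a < t < b ->
     ex_derive u t /\ ex_derive v t /\ ex_derive (Derive u) t /\ ex_derive (Derive v) t) ->
  (forall t, a < t < b -> (Derive u t)^2 + (sin (u t))^2 * (Derive v t)^2 = 1) ->
  (forall t, a < t < b -> Rpower (u t) alpha * sin (u t) ^ 2 * Derive v t = c0) ->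
  ~ (exists k, forall t, a < t < b -> curvature u v t = k) ->
  c0 <> 0.
Proof.
  intros Hrange Hreg Hunit Hc0 Hncurv ->. apply Hncurv. exists 0.
  assert (Hv0 : forall t, a < t < b -> Derive v t = 0).
  { intros t Ht. pose proof (Hrange t Ht).
    assert (0 < Rpower (u t) alpha * sin (u t) ^ 2).
    { apply Rmult_lt_0_compat; [apply exp_pos | apply pow_lt, sin_gt_0; lra]. }
    destruct (Rmult_integral _ _ (Hc0 t Ht)); lra. }
  apply (meridian_curvature_eq0 a b u v).
  - intros t Ht. destruct (Hreg t Ht) as [Hu [_ [Hdu _]]]. split; assumption.
  - intros t Ht. rewrite <- (Hunit t Ht), (Hv0 t Ht). ring.
  - intros t Ht. rewrite <- (Hv0 t Ht). apply Derive_correct, Hreg, Ht.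
Qed.

Lemma unit_speed_increments alpha p q (u v : R -> R) c e0 e1 :
  (forall t, p < t < q -> 0 < u t < PI) ->
  (forall t, p < t < q ->
     ex_derive u t /\ ex_derive v t /\ ex_derive (Derive u) t /\ ex_derive (Derive v) t) ->
  (forall t, p < t < q -> (Derive u t)^2 + (sin (u t))^2 * (Derive v t)^2 = 1) ->
  (forall t, p < t < q -> Rpower (u t) alpha * sin (u t) ^ 2 * Derive v t = e0 * c) ->
  (e0 = 1 \/ e0 = -1) -> (e1 = 1 \/ e1 = -1) ->
  (forall t, p < t < q -> 0 < e1 * Derive u t) ->
  forall t0 t1, p < t0 < q -> p < t1 < q ->
    t1 - t0 = e1 * RInt (dt_du alpha c) (u t0) (u t1) /\
    v t1 - v t0 = e0 * e1 * RInt (dv_du alpha c) (u t0) (u t1).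
Proof.
  intros Hrange Hreg Hunit Hc He0 He1 Hsign t0 t1 Ht0 Ht1.
  assert (Hu : forall t, p < t < q -> ex_derive u t /\ continuous (Derive u) t).
  { intros t Ht. destruct (Hreg t Ht) as [Hu [_ [Hdu _]]].
    split; [exact Hu | apply (ex_derive_continuous (Derive u)), Hdu]. }
  split.
  - apply (increment_eq_RInt_comp _ u id e1 p q); auto.
    + intros t _. split; [apply ex_derive_id |].
      apply (continuous_ext (fun _ => 1)); [intros s; symmetry; apply Derive_id |].
      apply continuous_const.
    + intros t Ht. apply (continuous_dt_du alpha c e0 e1 _ (Derive u t) (Derive v t)); auto.
    + intros t Ht. rewrite Derive_id.
      apply (unit_speed_dt_du alpha c e0 e1 _ _ (Derive v t)); auto.
  - apply (increment_eq_RInt_comp _ u v (e0 * e1) p q); auto.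
    + intros t Ht. destruct (Hreg t Ht) as [_ [Hv [_ Hdv]]].
      split; [exact Hv | apply (ex_derive_continuous (Derive v)), Hdv].
    + intros t Ht. apply (continuous_dv_du alpha c e0 e1 _ (Derive u t) (Derive v t)); auto.
    + intros t Ht. apply (unit_speed_dv_du alpha c e0 e1 _ (Derive u t)); auto.
Qed.

Theorem theorem3p6 (alpha a b : R) (u v : R -> R) :
  alpha <> 0 -> a < b ->
  (* avoids N (and u stays in the chart range (0,pi)) *)
  (forall t, a < t < b -> 0 < u t < PI) ->
  (* regularity: u, v twice differentiable *)
  (forall t, a < t < b ->
     ex_derive u t /\ ex_derive v t /\ ex_derive (Derive u) t /\ ex_derive (Derive v) t) ->
  (* arc-length parametrization *)
  (forall t, a < t < b -> (Derive u t)^2 + (sin (u t))^2 * (Derive v t)^2 = 1) ->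
  alpha_stationary alpha a b u v ->
  (* not of constant curvature *)
  ~ (exists k, forall t, a < t < b -> curvature u v t = k) ->
  exists c, 0 < c /\
    forall a' b', a <= a' -> a' < b' -> b' <= b ->
      (forall t, a' < t < b' -> Derive u t <> 0) ->
      exists e1 e2, (e1 = 1 \/ e1 = -1) /\ (e2 = 1 \/ e2 = -1) /\
        forall t0 t1, a' < t0 < b' -> a' < t1 < b' ->
          t1 - t0 = e1 * RInt (fun s => Rpower s alpha * sin s
                          / sqrt (Rpower s (2 * alpha) * (sin s)^2 - c^2)) (u t0) (u t1)
          /\ v t1 - v t0 = e2 * RInt (fun s => c
                          / (sin s * sqrt (Rpower s (2 * alpha) * (sin s)^2 - c^2))) (u t0) (u t1).
Proof.
  intros _ Hab Hrange Hreg Hunit Hstat Hncurv.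
  destruct (clairaut_first_integral alpha a b u v Hab Hstat Hunit) as [c0 Hc0].
  pose proof (clairaut_constant_neq0 alpha a b u v c0 Hrange Hreg Hunit Hc0 Hncurv) as Hc0nz.
  destruct (Rabs_sign c0) as [e0 [He0 Hc0e0]].
  exists (Rabs c0). split; [apply Rabs_pos_lt, Hc0nz |].
  intros a' b' Ha' Hab' Hb' Hu'nz.
  destruct (continuous_nonzero_sign (Derive u) a' b') as [e1 [He1 Hsign]];
    [exact Hab' | | exact Hu'nz |].
  { intros t Ht. apply (ex_derive_continuous (Derive u)), Hreg. lra. }
  exists e1, (e0 * e1). split; [exact He1 |]. split.
  { destruct He0 as [-> | ->], He1 as [-> | ->]; [left | right | right | left]; ring. }
  apply (unit_speed_increments alpha a' b' u v (Rabs c0) e0 e1); auto.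
  - intros t Ht. apply Hrange. lra.
  - intros t Ht. apply Hreg. lra.
  - intros t Ht. apply Hunit. lra.
  - intros t Ht. rewrite <- Hc0e0. apply Hc0. lra.
Qed.
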